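(* Let $\Gamma=A\ast B$ be a free product of two non-trivial groups $A,B$, and let $E$ be a Banach $\Gamma$-module (regarded also as an $A$-module and a $B$-module via the inclusions $A,B\hookrightarrow\Gamma$). For $f_A\in\mathrm{Q}\mathcal{Z}_{\mathrm{alt}}(A,E)$ and $f_B\in\mathrm{Q}\mathcal{Z}_{\mathrm{alt}}(B,E)$, the split map $f=f_A\ast f_B:\Gamma\to E$ is an alternating quasicocycle on $\Gamma$ with $\mathrm{def}\, f=\max\{\mathrm{def}\, f_A,\mathrm{def}\, f_B\}$. Moreover, the induced linear map \[ \mathrm{Q}\mathcal{Z}_{\mathrm{alt}}(A,E)\times\mathrm{Q}\mathcal{Z}_{\mathrm{alt}}(B,E)\to\mathrm{Q}\mathcal{Z}_{\mathrm{alt}}(\Gamma,E),\quad (f_A,f_B)\mapsto f_A\ast f_B \] extends the natural isomorphism $\mathcal{Z}^1(A,E)\times\mathcal{Z}^1(B,E)\to\mathcal{Z}^1(\Gamma,E)$.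
   Context: A Banach $\Gamma$-module is a Banach space $E$ with a linear isometric action of $\Gamma$, written $g.v$. A map $f:\Gamma\to E$ is a quasicocycle if $\mathrm{def}\, f:=\sup_{g,h\in\Gamma}\|f(gh)-f(g)-g.f(h)\|_E<\infty$; $\mathrm{Q}\mathcal{Z}(\Gamma,E)$ denotes the space of quasicocycles, and $\mathrm{Q}\mathcal{Z}_{\mathrm{alt}}(\Gamma,E)$ the subspace of alternating ones, i.e. those with $f(g)+g.f(g^{-1})=0$ for all $g$. $\mathcal{Z}^1(\Gamma,E)$ denotes the space of cocycles, i.e. maps with $f(gh)=f(g)+g.f(h)$. Every $1\neq g\in\Gamma=A\ast B$ has a unique normal form $g=a_1b_1a_2b_2\cdots a_nb_n$ with $a_i\in A$, $b_i\in B$, all non-trivial except possibly $a_1$ or $b_n$. The split map is defined by $(f_A\ast f_B)(1)=0$ and \[ (f_A\ast f_B)(a_1b_1\cdots a_nb_n)=f_A(a_1)+a_1.f_B(b_1)+a_1b_1.f_A(a_2)+\dots+a_1b_1a_2\cdots b_{n-1}a_n.f_B(b_n). \] *)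

From HB Require Import structures.
From mathcomp Require Import all_boot all_order all_algebra monoid.
From mathcomp Require Import all_classical all_reals all_analysis.
Set Implicit Arguments. Unset Strict Implicit. Unset Printing Implicit Defensive.
Import Order.TTheory GRing.Theory Num.Theory.
Import numFieldNormedType.Exports.
Local Open Scope classical_set_scope.
Local Open Scope ring_scope.

Section Modules.
Variables (R : realType) (E : normedModType R) (G : groupType).

Definition isometric_linear_action (act : G -> E -> E) : Prop :=
  [/\ (forall g (c : R) (u v : E), act g (c *: u + v) = c *: act g u + act g v),
      (forall g v, `|act g v| = `|v|),
      (forall v, act 1%g v = v) &
      (forall g h v, act (g * h)%g v = act g (act h v))].

Definition qc_defect (act : G -> E -> E) (f : G -> E) : \bar R :=
  ereal_sup [set x | exists g h, x = (`|f (g * h)%g - f g - act g (f h)|)%:E].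

Definition is_quasicocycle (act : G -> E -> E) (f : G -> E) : Prop :=
  (qc_defect act f < +oo)%E.

Definition is_alternating (act : G -> E -> E) (f : G -> E) : Prop :=
  forall g, f g + act g (f (g^-1)%g) = 0.

Definition alt_quasicocycle (act : G -> E -> E) (f : G -> E) : Prop :=
  is_quasicocycle act f /\ is_alternating act f.

Definition is_cocycle (act : G -> E -> E) (f : G -> E) : Prop :=
  forall g h, f (g * h)%g = f g + act g (f h).

End Modules.

Section FreeProduct.
Variables (A B G : groupType) (iA : A -> G) (iB : B -> G).

Definition letter_val (x : (A + B)%type) : G :=
  match x with inl a => iA a | inr b => iB b end.

Definition letter_nontrivial (x : (A + B)%type) : Prop :=
  match x with inl a => a <> 1%g | inr b => b <> 1%g end.

Definition letter_side (x : (A + B)%type) : bool :=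
  match x with inl _ => true | inr _ => false end.

Fixpoint reduced (w : seq (A + B)) : Prop :=
  match w with
  | [::] => True
  | x :: w' => [/\ letter_nontrivial x, reduced w' &
                  match w' with [::] => True | y :: _ => letter_side x <> letter_side y end]
  end.

Definition evalw (w : seq (A + B)) : G := foldr (fun x g => (letter_val x * g)%g) 1%g w.

(* G is the (internal) free product A * B, with A, B included via iA, iB:
   iA, iB are homomorphisms and every element of G has a unique reduced normal form. *)
Definition is_free_product : Prop :=
  [/\ (forall a a', iA (a * a')%g = (iA a * iA a')%g),
      (forall b b', iB (b * b')%g = (iB b * iB b')%g) &
      (forall g, exists! w, reduced w /\ evalw w = g)].

End FreeProduct.

Section Split.
Variables (R : realType) (E : normedModType R) (A B G : groupType)
  (iA : A -> G) (iB : B -> G) (act : G -> E -> E).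

Definition letter_f (fA : A -> E) (fB : B -> E) (x : (A + B)%type) : E :=
  match x with inl a => fA a | inr b => fB b end.

Definition split_word (fA : A -> E) (fB : B -> E) (w : seq (A + B)) : E :=
  \sum_(i < size w)
     act (@evalw A B G iA iB (take i w)) (letter_f fA fB (nth (inl 1%g) w i)).

Definition split_map (fA : A -> E) (fB : B -> E) (g : G) : E :=
  xget 0 [set v | exists w, [/\ @reduced A B w, @evalw A B G iA iB w = g
                              & v = split_word fA fB w]].

End Split.

From Pilot Require Import Defs.
From HB Require Import structures.
From mathcomp Require Import all_boot all_order all_algebra monoid.
From mathcomp Require Import all_classical all_reals all_analysis.
Set Implicit Arguments. Unset Strict Implicit. Unset Printing Implicit Defensive.
Import Order.TTheory GRing.Theory Num.Theory.
Import numFieldNormedType.Exports.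
Local Open Scope classical_set_scope.
Local Open Scope ring_scope.

(* On a reduced word x_1 ... x_n the split map is the sum of the translates
   (x_1 ... x_(i-1)).f(x_i), so it satisfies the cocycle identity on every pair
   of reduced words whose concatenation is reduced.  For reduced u, v the
   defect at (u, v) is computed by induction on v: at the junction, letters
   from different factors give a reduced product and defect 0; mutually
   inverse letters cancel without changing the defect, since f_A and f_B are
   alternating; other letters from the same factor merge, and the defect is a
   translate by an isometry of a defect of f_A or f_B.  So f has exactly the
   defect values of f_A and f_B, which gives the defect formula and, when all
   these values vanish, the cocycle statements. *)

Lemma ereal_sup_setU (R : realType) (S1 S2 : set (\bar R)) :
  ereal_sup (S1 `|` S2) = maxe (ereal_sup S1) (ereal_sup S2).
Proof.
apply/eqP; rewrite eq_le ge_max (ereal_sup_le (@subsetUl _ S1 S2)).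
rewrite (ereal_sup_le (@subsetUr _ S1 S2)) !andbT.
apply: ge_ereal_sup => x [S1x|S2x]; rewrite le_max.
  by rewrite (ereal_sup_ubound S1x).
by rewrite (ereal_sup_ubound S2x) orbT.
Qed.

Section GroupMorphism.
Variables (H G : groupType) (f : H -> G).
Hypothesis fM : {morph f : x y / (x * y)%g}.

Lemma gmorph1 : f 1%g = 1%g.
Proof. by apply: (mulgI (f 1%g)); rewrite -fM !mulg1. Qed.

Lemma gmorphV x : f (x^-1)%g = ((f x)^-1)%g.
Proof. by apply/esym/mulg1_eq; rewrite -fM mulgV gmorph1. Qed.

End GroupMorphism.

Section LinearAction.
Variables (R : pzRingType) (E : lmodType R) (G : groupType) (act : G -> E -> E).
Hypothesis act_linear : forall g (c : R) (u v : E), act g (c *: u + v) = c *: act g u + act g v.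

Lemma actD g u v : act g (u + v) = act g u + act g v.
Proof. by rewrite -[u in LHS]scale1r act_linear scale1r. Qed.

Lemma act0 g : act g 0 = 0.
Proof. by apply: (addrI (act g 0)); rewrite -actD !addr0. Qed.

Lemma actN g u : act g (- u) = - act g u.
Proof. by rewrite -scaleN1r -[_ *: u]addr0 act_linear act0 addr0 scaleN1r. Qed.

Lemma act_sum g I (r : seq I) (P : pred I) (F : I -> E) :
  act g (\sum_(i <- r | P i) F i) = \sum_(i <- r | P i) act g (F i).
Proof. exact: (big_morph (act g) (actD g) (act0 g)). Qed.

End LinearAction.

Section Cochains.
Variables (R : realType) (E : normedModType R) (G : groupType) (act : G -> E -> E).
Hypothesis act1 : forall v, act 1%g v = v.

Definition defect_at (f : G -> E) (g h : G) : E := f (g * h)%g - f g - act g (f h).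

Definition defect_set (f : G -> E) : set (\bar R) :=
  [set x | exists g h, x = (`|defect_at f g h|)%:E].

Lemma qc_defectE f : qc_defect act f = ereal_sup (defect_set f).
Proof. by []. Qed.

Lemma cocycleP f : is_cocycle act f <-> forall g h, defect_at f g h = 0.
Proof.
split=> cf g h; first by rewrite /defect_at cf addrAC addrK subrr.
by apply/eqP; rewrite -subr_eq0 opprD addrA; apply/eqP/cf.
Qed.

Lemma cocycle1 f : is_cocycle act f -> f 1%g = 0.
Proof.
move=> cf; have := cf 1%g 1%g; rewrite mulg1 act1 => f1.
by apply: (addrI (f 1%g)); rewrite addr0 -f1.
Qed.

Lemma cocycle_alternating f : is_cocycle act f -> is_alternating act f.
Proof. by move=> cf g; rewrite -cf mulgV cocycle1. Qed.

Lemma alternating1 f : is_alternating act f -> f 1%g = 0.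
Proof.
move=> af; have := af 1%g; rewrite invg1 act1 -mulr2n -scaler_nat => /eqP.
by rewrite scaler_eq0 pnatr_eq0 => /eqP.
Qed.

End Cochains.

Section Words.
Variables (A B G : groupType) (iA : A -> G) (iB : B -> G).
Hypotheses (iAM : {morph iA : x y / (x * y)%g}) (iBM : {morph iB : x y / (x * y)%g}).

Local Notation letter := (A + B)%type.
Local Notation evalw := (evalw iA iB).
Local Notation letter_val := (letter_val iA iB).
Local Notation reduced := (@reduced A B).
Local Notation nontrivial := (@letter_nontrivial A B).
Local Notation side := (@letter_side A B).
Implicit Types (u v w p : seq letter) (x y z : letter).

Lemma evalw_cons x w : evalw (x :: w) = (letter_val x * evalw w)%g.
Proof. by []. Qed.

Lemma evalw_cat u v : evalw (u ++ v) = (evalw u * evalw v)%g.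
Proof. by elim: u => [|x u IH]; rewrite ?mul1g // cat_cons !evalw_cons IH mulgA. Qed.

Lemma evalw_rcons u x : evalw (rcons u x) = (evalw u * letter_val x)%g.
Proof. by rewrite -cats1 evalw_cat evalw_cons mulg1. Qed.

Lemma reduced_cons2 x y w :
  reduced [:: x, y & w] <-> [/\ nontrivial x, reduced (y :: w) & side x <> side y].
Proof. exact: iff_refl. Qed.

Lemma reduced_cat u x v : reduced (u ++ x :: v) <-> reduced (rcons u x) /\ reduced (x :: v).
Proof.
elim: u => [|y [|z u] IH]; [by rewrite /=; firstorder .. |].
by rewrite cat_cons rcons_cons !reduced_cons2; move: IH; firstorder.
Qed.

Lemma reduced_catl u v : reduced (u ++ v) -> reduced u.
Proof.
elim: u => [|y u IH] //; rewrite cat_cons.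
by case: u IH => [|z u] IH; [case | rewrite !reduced_cons2 => -[? /IH]].
Qed.

Lemma reduced_catr u v : reduced (u ++ v) -> reduced v.
Proof. by elim: u => [|y u IH] //; rewrite cat_cons => -[_ /IH]. Qed.

Lemma reduced_rcons u x : reduced (rcons u x) -> reduced u /\ nontrivial x.
Proof. by rewrite -cats1 => r; split; [apply: reduced_catl r | case: (reduced_catr r)]. Qed.

Lemma reduced_join p y z v : reduced (rcons p y) -> reduced (z :: v) ->
  side y <> side z -> reduced (rcons p y ++ z :: v).
Proof.
move=> rpy rzv yz; rewrite cat_rcons reduced_cat reduced_cons2.
by have [_ ?] := reduced_rcons rpy.
Qed.

Lemma reduced_rcons_subst u x x' : reduced (rcons u x) -> nontrivial x' ->
  side x' = side x -> reduced (rcons u x').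
Proof.
case/lastP: u => [|u y]; first by move=> _ ? _; split.
rewrite -!(cats1 (rcons u y)) !cat_rcons !reduced_cat.
by move=> [? [? _ yx]] ? x'x; split=> //; split=> //; rewrite x'x.
Qed.

Lemma reduced_cons_subst x x' v : reduced (x :: v) -> nontrivial x' ->
  side x' = side x -> reduced (x' :: v).
Proof. by case: v => [|y v] [? ? ?] ? x'x //; split=> //; rewrite x'x. Qed.

Lemma reduced_merge p y z m v : reduced (rcons p y) -> reduced (z :: v) ->
  nontrivial m -> side m = side y -> side m = side z -> reduced (p ++ m :: v).
Proof.
move=> rpy rzv ntm my mz; apply/reduced_cat; split.
  exact: reduced_rcons_subst rpy ntm my.
exact: reduced_cons_subst rzv ntm mz.
Qed.

Definition letter_inv x : letter :=
  match x with inl a => inl (a^-1)%g | inr b => inr (b^-1)%g end.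

Definition word_inv w := rev (map letter_inv w).

Lemma word_inv_cons x w : word_inv (x :: w) = rcons (word_inv w) (letter_inv x).
Proof. by rewrite /word_inv map_cons rev_cons. Qed.

Lemma letter_val_inv x : letter_val (letter_inv x) = ((letter_val x)^-1)%g.
Proof. by case: x => [a|b] /=; rewrite gmorphV. Qed.

Lemma nontrivial_letter_inv x : nontrivial x -> nontrivial (letter_inv x).
Proof. by case: x => [a|b] /= ntx /(congr1 (fun g => g^-1)%g); rewrite invgK invg1. Qed.

Lemma side_letter_inv x : side (letter_inv x) = side x.
Proof. by case: x. Qed.

Lemma evalw_word_inv w : evalw (word_inv w) = ((evalw w)^-1)%g.
Proof.
elim: w => [|x w IH]; first by rewrite /= invg1.
by rewrite word_inv_cons evalw_rcons IH letter_val_inv evalw_cons invgM.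
Qed.

Lemma reduced_word_inv w : reduced w -> reduced (word_inv w).
Proof.
elim: w => [|x [|y w] IH] // rw.
  by rewrite word_inv_cons /=; case: rw => ntx _ _; split=> //; apply: nontrivial_letter_inv.
have /reduced_cons2[ntx ryw xy] := rw.
rewrite word_inv_cons -cats1 {1}word_inv_cons; apply: reduced_join.
- by rewrite -word_inv_cons; apply: IH.
- by split=> //; apply: nontrivial_letter_inv.
- by rewrite !side_letter_inv => /esym.
Qed.

End Words.

Section SplitMap.
Variables (R : realType) (E : normedModType R) (A B G : groupType)
  (iA : A -> G) (iB : B -> G) (act : G -> E -> E).
Hypotheses (iAM : {morph iA : x y / (x * y)%g}) (iBM : {morph iB : x y / (x * y)%g}).
Hypothesis normal_form : forall g, exists! w, @reduced A B w /\ evalw iA iB w = g.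
Hypothesis act_linear :
  forall g (c : R) (u v : E), act g (c *: u + v) = c *: act g u + act g v.
Hypothesis act_isometric : forall g v, `|act g v| = `|v|.
Hypothesis act1 : forall v, act 1%g v = v.
Hypothesis actM : forall g h v, act (g * h)%g v = act g (act h v).

Local Notation letter := (A + B)%type.
Local Notation evalw := (evalw iA iB).
Local Notation letter_val := (letter_val iA iB).
Local Notation reduced := (@reduced A B).
Local Notation nontrivial := (@letter_nontrivial A B).
Local Notation side := (@letter_side A B).
Local Notation split_word := (split_word iA iB act).
Local Notation split_map := (split_map iA iB act).
Local Notation actA := (fun a => act (iA a)).
Local Notation actB := (fun b => act (iB b)).
Local Notation actD := (actD act_linear).
Local Notation act0 := (act0 act_linear).
Local Notation actN := (actN act_linear).
Implicit Types (u v w p : seq letter) (x y z : letter).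

Let actA1 (e : E) : act (iA 1%g) e = e. Proof. by rewrite gmorph1 // act1. Qed.
Let actB1 (e : E) : act (iB 1%g) e = e. Proof. by rewrite gmorph1 // act1. Qed.

Lemma split_map_evalw fA fB w : reduced w -> split_map fA fB (evalw w) = split_word fA fB w.
Proof.
move=> rw; rewrite /split_map; apply: xget_unique; first by exists w.
move=> _ [w' [rw' ew' ->]]; have [w0 [_ w0_uniq]] := normal_form (evalw w).
by rewrite -(w0_uniq w' (conj rw' ew')) -(w0_uniq w (conj rw erefl)).
Qed.

Section SplitWord.
Variables (fA : A -> E) (fB : B -> E).
Local Notation letter_f := (letter_f fA fB).
Local Notation split_word := (split_word fA fB).

Lemma split_word_nil : split_word [::] = 0.
Proof. by rewrite /split_word big_ord0. Qed.

Lemma split_word_cons x w : split_word (x :: w) = letter_f x + act (letter_val x) (split_word w).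
Proof.
rewrite /split_word big_ord_recl /= act1 act_sum //; congr (_ + _).
by apply: eq_bigr => i _; rewrite actM.
Qed.

Lemma split_word_cat u v : split_word (u ++ v) = split_word u + act (evalw u) (split_word v).
Proof.
elim: u => [|x u IH]; first by rewrite split_word_nil add0r act1.
by rewrite cat_cons !split_word_cons IH evalw_cons actD actM addrA.
Qed.

Lemma split_word_rcons u x : split_word (rcons u x) = split_word u + act (evalw u) (letter_f x).
Proof. by rewrite -cats1 split_word_cat split_word_cons split_word_nil act0 addr0. Qed.

End SplitWord.

Lemma split_word_linear c fA fA' fB fB' w :
  split_word (fun a => c *: fA a + fA' a) (fun b => c *: fB b + fB' b) w
  = c *: split_word fA fB w + split_word fA' fB' w.
Proof.
rewrite /Defs.split_word scaler_sumr -big_split; apply: eq_bigr => i _ /=.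
by case: nth => [a|b]; rewrite act_linear.
Qed.

Lemma split_map_linear c fA fA' fB fB' :
  split_map (fun a => c *: fA a + fA' a) (fun b => c *: fB b + fB' b)
  = (fun g => c *: split_map fA fB g + split_map fA' fB' g).
Proof.
apply: funext => g; have [w [[rw <-] _]] := normal_form g.
by rewrite !split_map_evalw // split_word_linear.
Qed.

Lemma split_word_cocycle f w : is_cocycle act f ->
  split_word (fun a => f (iA a)) (fun b => f (iB b)) w = f (evalw w).
Proof.
move=> cf; elim: w => [|x w IH]; first by rewrite split_word_nil (cocycle1 act1).
by rewrite split_word_cons IH evalw_cons cf; case: x.
Qed.

Lemma split_map_of_cocycle f : is_cocycle act f ->
  split_map (fun a => f (iA a)) (fun b => f (iB b)) = f.
Proof.
move=> cf; apply: funext => g; have [w [[rw <-] _]] := normal_form g.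
by rewrite split_map_evalw // split_word_cocycle.
Qed.

Section FactorQuasicocycles.
Variables (fA : A -> E) (fB : B -> E).
Local Notation letter_f := (letter_f fA fB).
Local Notation F := (split_map fA fB).
Local Notation factor_defects := (defect_set actA fA `|` defect_set actB fB).

Lemma split_map_iA a : fA 1%g = 0 -> F (iA a) = fA a.
Proof.
move=> fA1; case: (eqVneq a 1%g) => [->|nta].
  by rewrite gmorph1 // (split_map_evalw _ _ (w := [::])) // split_word_nil.
have ra : reduced [:: inl a] by split=> //; apply/eqP.
have := split_map_evalw fA fB ra.
by rewrite split_word_cons split_word_nil act0 addr0 evalw_cons mulg1.
Qed.

Lemma split_map_iB b : fB 1%g = 0 -> F (iB b) = fB b.
Proof.
move=> fB1; case: (eqVneq b 1%g) => [->|ntb].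
  by rewrite gmorph1 // (split_map_evalw _ _ (w := [::])) // split_word_nil.
have rb : reduced [:: inr b] by split=> //; apply/eqP.
have := split_map_evalw fA fB rb.
by rewrite split_word_cons split_word_nil act0 addr0 evalw_cons mulg1.
Qed.

Section Alternating.
Hypotheses (altA : is_alternating actA fA) (altB : is_alternating actB fB).

Let fA1 : fA 1%g = 0. Proof. exact: (alternating1 (act := actA) actA1 altA). Qed.
Let fB1 : fB 1%g = 0. Proof. exact: (alternating1 (act := actB) actB1 altB). Qed.

Lemma letter_alternating x : letter_f x + act (letter_val x) (letter_f (letter_inv x)) = 0.
Proof. by case: x => [a|b]; [exact: altA | exact: altB]. Qed.

Lemma split_word_alternating w :
  split_word fA fB w + act (evalw w) (split_word fA fB (word_inv w)) = 0.
Proof.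
elim: w => [|x w IH]; first by rewrite split_word_nil act0 addr0.
rewrite word_inv_cons split_word_rcons split_word_cons evalw_cons actM actD.
rewrite evalw_word_inv // -(actM (evalw w)) mulgV act1 -(letter_alternating x) -addrA.
by congr (_ + _); rewrite actD addrA -actD IH act0 add0r.
Qed.

Lemma split_map_alternating : is_alternating act F.
Proof.
move=> g; have [w [[rw <-] _]] := normal_form g.
rewrite -evalw_word_inv // !split_map_evalw //; last exact: reduced_word_inv.
exact: split_word_alternating.
Qed.

Lemma split_defect_join u v : reduced (u ++ v) -> defect_at act F (evalw u) (evalw v) = 0.
Proof.
move=> ruv; have ru := reduced_catl ruv; have rv := reduced_catr ruv.
by rewrite /defect_at -evalw_cat !split_map_evalw // split_word_cat addrAC addrK subrr.
Qed.

Lemma split_defect_merge p y z m v : letter_val m = (letter_val y * letter_val z)%g ->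
  reduced (rcons p y) -> reduced (z :: v) -> reduced (p ++ m :: v) ->
  defect_at act F (evalw (rcons p y)) (evalw (z :: v))
  = act (evalw p) (letter_f m - letter_f y - act (letter_val y) (letter_f z)).
Proof.
move=> mval rpy rzv rpmv; rewrite /defect_at.
have -> : (evalw (rcons p y) * evalw (z :: v))%g = evalw (p ++ m :: v).
  by rewrite evalw_rcons evalw_cat !evalw_cons mval !mulgA.
rewrite !split_map_evalw // split_word_cat split_word_rcons !split_word_cons.
rewrite evalw_rcons mval !actM !actD !actN.
set s := split_word _ _ p; set d := act _ (act _ (letter_f z)); set c := act _ (act _ _).
by rewrite [s + _]addrC addrKA [d + c]addrC addrAC addrKA addrAC.
Qed.

Lemma split_defect_cancel p y z v : (letter_val y * letter_val z = 1)%g ->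
  letter_f y + act (letter_val y) (letter_f z) = 0 ->
  reduced (rcons p y) -> reduced (z :: v) ->
  defect_at act F (evalw (rcons p y)) (evalw (z :: v)) = defect_at act F (evalw p) (evalw v).
Proof.
move=> yz1 yz0 rpy rzv; have [rp _] := reduced_rcons rpy; have [_ rv _] := rzv.
rewrite /defect_at.
have -> : (evalw (rcons p y) * evalw (z :: v))%g = (evalw p * evalw v)%g.
  by rewrite evalw_rcons evalw_cons mulgA -(mulgA (evalw p)) yz1 mulg1.
rewrite !split_map_evalw // split_word_rcons split_word_cons evalw_rcons actM.
rewrite (actD (letter_val y)) -[act (letter_val y) (act _ _)]actM yz1 act1 actD.
set a := act _ (letter_f y); set b := act _ (act _ (letter_f z)).
have ab0 : a + b = 0 by rewrite -actD yz0 act0.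
by rewrite -addrA -opprD -addrA [a + (b + _)]addrA ab0 add0r opprD addrA.
Qed.

Lemma factor_defects0 : factor_defects (`|0 : E|)%:E.
Proof. by left; exists 1%g, 1%g; rewrite /defect_at mulg1 fA1 act0 !subr0. Qed.

Lemma same_side_letter_mul y z : side y = side z -> nontrivial y -> nontrivial z ->
  (letter_val y * letter_val z = 1)%g /\ letter_f y + act (letter_val y) (letter_f z) = 0 \/
  exists m, [/\ nontrivial m, side m = side y, letter_val m = (letter_val y * letter_val z)%g
    & factor_defects (`|letter_f m - letter_f y - act (letter_val y) (letter_f z)|)%:E].
Proof.
case: y z => [a|b] [a'|b'] //= _ nty ntz.
  case: (eqVneq (a * a')%g 1%g) => [aa'1|aa'].
    by left; rewrite -iAM aa'1 gmorph1 // -(mulg1_eq aa'1).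
  right; exists (inl (a * a')%g); split=> //=; first exact/eqP.
  by left; exists a, a'.
case: (eqVneq (b * b')%g 1%g) => [bb'1|bb'].
  by left; rewrite -iBM bb'1 gmorph1 // -(mulg1_eq bb'1).
right; exists (inr (b * b')%g); split=> //=; first exact/eqP.
by right; exists b, b'.
Qed.

Lemma split_defect_reduced u v : reduced u -> reduced v ->
  factor_defects (`|defect_at act F (evalw u) (evalw v)|)%:E.
Proof.
elim: v u => [|z v IH] u ru rv.
  by rewrite split_defect_join ?cats0 //; exact: factor_defects0.
case/lastP: u ru => [|p y] ru; first by rewrite split_defect_join //; exact: factor_defects0.
have [rp nty] := reduced_rcons ru; have [ntz rv' _] := rv.
case: (eqVneq (side y) (side z)) => [yz | /eqP yz]; last first.
  by rewrite split_defect_join //; [exact: factor_defects0 | exact: reduced_join].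
case: (same_side_letter_mul yz nty ntz) => [[yz1 yz0] | [m [ntm my mval mdef]]].
  by rewrite split_defect_cancel //; apply: IH.
rewrite (split_defect_merge mval) // ?act_isometric //.
exact: reduced_merge ru rv ntm my (etrans my yz).
Qed.

Lemma split_map_defect_set : defect_set act F = factor_defects.
Proof.
apply/seteqP; split=> x.
  move=> [g [h ->]]; have [u [[ru <-] _]] := normal_form g.
  have [v [[rv <-] _]] := normal_form h; exact: split_defect_reduced.
case=> [[a [a' ->]] | [b [b' ->]]].
  by exists (iA a), (iA a'); rewrite /defect_at -iAM !split_map_iA.
by exists (iB b), (iB b'); rewrite /defect_at -iBM !split_map_iB.
Qed.

Lemma split_map_qc_defect :
  qc_defect act F = maxe (qc_defect actA fA) (qc_defect actB fB).
Proof. by rewrite !qc_defectE split_map_defect_set ereal_sup_setU. Qed.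

Lemma split_map_quasicocycle :
  is_quasicocycle actA fA -> is_quasicocycle actB fB -> is_quasicocycle act F.
Proof. by rewrite /is_quasicocycle split_map_qc_defect gt_max => -> ->. Qed.

End Alternating.

Lemma split_map_cocycle :
  is_cocycle actA fA -> is_cocycle actB fB -> is_cocycle act F.
Proof.
move=> cA cB; have altA := cocycle_alternating (act := actA) actA1 cA.
have altB := cocycle_alternating (act := actB) actB1 cB.
apply/cocycleP => g h; apply/normr0_eq0.
have : defect_set act F (`|defect_at act F g h|)%:E by exists g, h.
rewrite split_map_defect_set // => -[[a [a' [->]]] | [b [b' [->]]]];
  by rewrite (cocycleP _ _).1 ?normr0.
Qed.

End FactorQuasicocycles.

End SplitMap.

Unset Implicit Arguments.
Set Strict Implicit.

Theorem proposition2p1 (R : realType) (E : completeNormedModType R)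
  (A B G : groupType) (iA : A -> G) (iB : B -> G) (act : G -> E -> E) :
  (exists a : A, a <> 1%g) -> (exists b : B, b <> 1%g) ->
  is_free_product iA iB ->
  isometric_linear_action act ->
  let actA := fun a => act (iA a) in
  let actB := fun b => act (iB b) in
  let split := split_map iA iB act in
  (forall (fA : A -> E) (fB : B -> E),
     alt_quasicocycle actA fA -> alt_quasicocycle actB fB ->
     [/\ is_alternating act (split fA fB),
         is_quasicocycle act (split fA fB) &
         qc_defect act (split fA fB) = maxe (qc_defect actA fA) (qc_defect actB fB)]) /\
  (forall (c : R) (fA fA' : A -> E) (fB fB' : B -> E),
     alt_quasicocycle actA fA -> alt_quasicocycle actA fA' ->
     alt_quasicocycle actB fB -> alt_quasicocycle actB fB' ->
     split (fun a => c *: fA a + fA' a) (fun b => c *: fB b + fB' b)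
     = (fun g => c *: split fA fB g + split fA' fB' g)) /\
  (forall (fA : A -> E) (fB : B -> E),
     is_cocycle actA fA -> is_cocycle actB fB ->
     [/\ is_cocycle act (split fA fB),
         (forall a, split fA fB (iA a) = fA a) &
         (forall b, split fA fB (iB b) = fB b)]) /\
  (forall f : G -> E, is_cocycle act f ->
     split (fun a => f (iA a)) (fun b => f (iB b)) = f).
Proof.
move=> _ _ [iAM iBM normal_form] [act_linear act_isometric act1 actM] actA actB split.
have actA1 v : actA 1%g v = v by rewrite /actA gmorph1.
have actB1 v : actB 1%g v = v by rewrite /actB gmorph1.
rewrite /split; split; [|split; [|split]].
- move=> fA fB [qA altA] [qB altB]; split.
  + exact: split_map_alternating.
  + exact: split_map_quasicocycle.
  + exact: split_map_qc_defect.
- by move=> c fA fA' fB fB' _ _ _ _; apply: split_map_linear.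
- move=> fA fB cA cB; split.
  + exact: split_map_cocycle.
  + by move=> a; apply: split_map_iA => //; apply: cocycle1 cA.
  + by move=> b; apply: split_map_iB => //; apply: cocycle1 cB.
- by move=> f cf; apply: split_map_of_cocycle.
Qed.
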